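(* Let $M$ be a finite-dimensional quantum system with $\dim\mathcal H_M\ge 2$, let $P$ be a qubit with basis $\{|0\rangle,|1\rangle\}$, and let $|\psi_0\rangle\in\mathcal H_M$ be a unit vector. Let $\mathcal E_0(\cdot)=|\psi_0\rangle\langle\psi_0|\operatorname{Tr}[\cdot]$ be the pure erasure channel on $M$ and $\mathcal C=\mathcal E_0\otimes\mathcal I_P$, where $\mathcal I_P$ is the identity channel on $P$. Let $A$ and $B$ be copies of $M$, $\widetilde A=A\oplus\mathrm{Vac}$, $\widetilde B=B\oplus\mathrm{Vac}$, where $\mathrm{Vac}$ is a one-dimensional sector spanned by $|\mathrm{vac}\rangle$, and let $U:\mathcal H_M\otimes\mathcal H_P\to(\mathcal H_A\otimes\mathcal H_{\mathrm{Vac}})\oplus(\mathcal H_{\mathrm{Vac}}\otimes\mathcal H_B)\subseteq\mathcal H_{\widetilde A}\otimes\mathcal H_{\widetilde B}$ be the unitary defined by $U(|\psi\rangle\otimes|0\rangle)=|\psi\rangle\otimes|\mathrm{vac}\rangle$ and $U(|\psi\rangle\otimes|1\rangle)=|\mathrm{vac}\rangle\otimes|\psi\rangle$, with $\mathcal U(\cdot)=U\cdot U^\dagger$. Then there do not exist finite-dimensional systems $E$ and $F$, a state $\sigma_{EF}$ of $EF$, and unitaries $\widetilde V_{AE}=V_{AE}\oplus(|\mathrm{vac}\rangle\langle\mathrm{vac}|\otimes I_E)$ on $\mathcal H_{\widetilde A}\otimes\mathcal H_E$ and $\widetilde W_{BF}=W_{BF}\oplus(|\mathrm{vac}\rangle\langle\mathrm{vac}|\otimes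 I_F)$ on $\mathcal H_{\widetilde B}\otimes\mathcal H_F$ (with $V_{AE}$ unitary on $\mathcal H_A\otimes\mathcal H_E$ and $W_{BF}$ unitary on $\mathcal H_B\otimes\mathcal H_F$), such that for all states $\rho$ of $M$ and $\omega$ of $P$ $$\mathcal C(\rho\otimes\omega)=\mathcal U^\dagger\Big(\operatorname{Tr}_{EF}\big\{(\widetilde{\mathcal V}_{AE}\otimes\widetilde{\mathcal W}_{BF})[\mathcal U(\rho\otimes\omega)\otimes\sigma_{EF}]\big\}\Big),$$ where $\widetilde{\mathcal V}_{AE}(\cdot)=\widetilde V_{AE}\cdot\widetilde V_{AE}^\dagger$, $\widetilde{\mathcal W}_{BF}(\cdot)=\widetilde W_{BF}\cdot\widetilde W_{BF}^\dagger$ and $\mathcal U^\dagger(\cdot)=U^\dagger\cdot U$.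
   Context: $\widetilde{\mathcal V}_{AE}$ and $\widetilde{\mathcal W}_{BF}$ model the interaction of a particle with local environments $E$ and $F$ on two spatially separated paths; they act as the identity when the particle's input on that path is the vacuum. The tensor product $\widetilde{\mathcal V}_{AE}\otimes\widetilde{\mathcal W}_{BF}$ acts on $\widetilde A\otimes\widetilde B\otimes E\otimes F$ with subsystems reordered as appropriate. *)

(* An operator from the
   space with basis T to the space with basis S is a function S -> T -> C
   (its matrix entries), over an arbitrary numClosedFieldType C (e.g. the
   complex numbers), with conjugation x^*. *)
From HB Require Import structures.
From mathcomp Require Import all_boot all_order all_algebra.
Set Implicit Arguments. Unset Strict Implicit. Unset Printing Implicit Defensive.
Import Order.TTheory GRing.Theory Num.Theory.
Local Open Scope ring_scope.

Section Ops.
Variable C : numClosedFieldType.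

Definition op (S T : finType) := S -> T -> C.

Definition idop (S : finType) : op S S := fun i j => (i == j)%:R.

Definition mulop (S T U : finType) (A : op S T) (B : op T U) : op S U :=
  fun i k => \sum_(j : T) A i j * B j k.

Definition adjop (S T : finType) (A : op S T) : op T S :=
  fun i j => (A j i)^*.

Definition trop (S : finType) (A : op S S) : C := \sum_(i : S) A i i.

Definition tensop (S1 T1 S2 T2 : finType) (A : op S1 T1) (B : op S2 T2)
  : op (S1 * S2)%type (T1 * T2)%type :=
  fun i j => A i.1 j.1 * B i.2 j.2.

Definition ptrace2 (S T : finType) (X : op (S * T)%type (S * T)%type) : op S S :=
  fun i j => \sum_(k : T) X (i, k) (j, k).

Definition conjop (S T : finType) (A : op S T) (X : op T T) : op S S :=
  mulop (mulop A X) (adjop A).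

Definition unitary (S : finType) (A : op S S) : Prop :=
  mulop (adjop A) A = @idop S /\ mulop A (adjop A) = @idop S.

Definition psd (S : finType) (A : op S S) : Prop :=
  adjop A = A /\
  forall v : S -> C, 0 <= \sum_(i : S) \sum_(j : S) (v i)^* * A i j * v j.

Definition state (S : finType) (A : op S S) : Prop := psd A /\ trop A = 1.

(* M = 'I_m, P = bool (false = |0>, true = |1>),
   A~ = B~ = option 'I_m  with  None = |vac>. *)

Definition chanC (m : nat) (psi0 : 'I_m -> C)
  (X : op ('I_m * bool)%type ('I_m * bool)%type) : op ('I_m * bool)%type ('I_m * bool)%type :=
  fun i j => psi0 i.1 * (psi0 j.1)^* * \sum_(k : 'I_m) X (k, i.2) (k, j.2).

Definition Uvac (m : nat) : op (option 'I_m * option 'I_m)%type ('I_m * bool)%type :=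
  fun x j =>
    if j.2 then ((x.1 == None) && (x.2 == Some j.1))%:R
    else ((x.1 == Some j.1) && (x.2 == None))%:R.

Definition vacext (m : nat) (E : finType) (V : op ('I_m * E)%type ('I_m * E)%type)
  : op (option 'I_m * E)%type (option 'I_m * E)%type :=
  fun x y =>
    match x.1, y.1 with
    | Some a, Some b => V (a, x.2) (b, y.2)
    | None, None => (x.2 == y.2)%:R
    | _, _ => 0
    end.

(* V~_{AE} (x) W~_{BF} acting on (A~ B~)(E F), subsystems reordered *)
Definition locop (A B E F : finType)
  (Vt : op (A * E)%type (A * E)%type) (Wt : op (B * F)%type (B * F)%type)
  : op ((A * B) * (E * F))%type ((A * B) * (E * F))%type :=
  fun x y => Vt (x.1.1, x.2.1) (y.1.1, y.2.1) * Wt (x.1.2, x.2.2) (y.1.2, y.2.2).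

End Ops.

(* Feed the product input |k><k| (x) omega through the local simulation.  Every entry
   of the output is a Gram matrix, for the semi-inner product defined by sigma, of
   amplitude vectors: a_i when the particle travels along path A (scattered by V), b_i
   when it travels along path B (scattered by W).  The inputs omega = |0><0|, |1><1| and
   |+><+| force the Gram matrices of (a, a), (b, b) and (a, b) all to equal
   |psi0><psi0|, so by Cauchy-Schwarz every a_i and every b_i is psi0(i) times one
   common vector, up to null vectors.  Summing the b-side over B and F and using the
   unitarity of W identifies that vector's Gram matrix with the marginal sigma_E, hence
   V (|k><k| (x) sigma_E) V^dagger = |psi0><psi0| (x) sigma_E for every k.  Since V is
   unitary, |k><k| (x) sigma_E cannot depend on k; as dim M >= 2 this forces
   sigma_E = 0, contradicting Tr sigma = 1. *)

From HB Require Import structures.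
From mathcomp Require Import all_boot all_order all_algebra ring.
From Stdlib Require Import FunctionalExtensionality.
Set Implicit Arguments. Unset Strict Implicit. Unset Printing Implicit Defensive.
Import Order.TTheory GRing.Theory Num.Theory.
Local Open Scope ring_scope.

Section BigSums.
Variable R : pzSemiRingType.

Lemma sum_option (T : finType) (G : option T -> R) :
  \sum_(x : option T) G x = G None + \sum_(t : T) G (Some t).
Proof.
rewrite (bigD1 None) //=; congr (_ + _).
rewrite (reindex_omap Some (fun x => x)) //=; last by case.
by apply: eq_bigl => t; rewrite eqxx.
Qed.

Lemma sum_pair (A B : finType) (G : A * B -> R) :
  \sum_(x : A * B) G x = \sum_(a : A) \sum_(b : B) G (a, b).
Proof. by rewrite pair_bigA; apply: eq_bigr => -[]. Qed.

Lemma sum_deltal (T : finType) (a : T) (G : T -> R) :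
  \sum_x (x == a)%:R * G x = G a.
Proof.
rewrite (bigD1 a) //= eqxx mul1r big1 ?addr0 // => x /negbTE ->.
by rewrite mul0r.
Qed.

Lemma sum_deltar (T : finType) (a : T) (G : T -> R) :
  \sum_x G x * (x == a)%:R = G a.
Proof.
rewrite (bigD1 a) //= eqxx mulr1 big1 ?addr0 // => x /negbTE ->.
by rewrite mulr0.
Qed.

End BigSums.

Section Operators.
Variable C : numClosedFieldType.

Lemma op_ext (S T : finType) (A B : op C S T) : (forall i j, A i j = B i j) -> A = B.
Proof.
by move=> AB; apply: functional_extensionality => i; apply: functional_extensionality.
Qed.

Lemma mulopA (S T U X : finType) (A : op C S T) (B : op C T U) (D : op C U X) :
  mulop (mulop A B) D = mulop A (mulop B D).
Proof.
apply: op_ext => i j; rewrite /mulop; under eq_bigr do rewrite mulr_suml.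
rewrite exchange_big; apply: eq_bigr => x _; rewrite mulr_sumr.
by apply: eq_bigr => y _; rewrite mulrA.
Qed.

Lemma mul1op (S T : finType) (A : op C S T) : mulop (@idop C S) A = A.
Proof.
apply: op_ext => i j; rewrite /mulop /idop.
by under eq_bigr do rewrite eq_sym; rewrite sum_deltal.
Qed.

Lemma mulop1 (S T : finType) (A : op C S T) : mulop A (@idop C T) = A.
Proof. by apply: op_ext => i j; rewrite /mulop /idop sum_deltar. Qed.

Lemma conjopE (S T : finType) (A : op C S T) (X : op C T T) i j :
  conjop A X i j = \sum_z \sum_w A i z * X z w * (A j w)^*.
Proof.
rewrite /conjop {1}/mulop exchange_big; apply: eq_bigr => z _.
by rewrite /mulop mulr_suml.
Qed.

Lemma conjopK (S : finType) (V X : op C S S) :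
  unitary V -> mulop (mulop (adjop V) (conjop V X)) V = X.
Proof. by case=> VV _; rewrite /conjop -!mulopA VV mul1op mulopA VV mulop1. Qed.

Lemma conjop_inj (S : finType) (V : op C S S) : unitary V -> injective (conjop V).
Proof.
by move=> uV X Y /(congr1 (fun Z => mulop (mulop (adjop V) Z) V)); rewrite !conjopK.
Qed.

Lemma unitary_cols (S : finType) (V : op C S S) a b :
  unitary V -> \sum_x (V x a)^* * V x b = (a == b)%:R.
Proof. by case=> VV _; have := congr1 (fun M => M a b) VV. Qed.

Lemma trop_ptrace2 (S T : finType) (X : op C (S * T)%type (S * T)%type) :
  trop (ptrace2 X) = trop X.
Proof. by rewrite /trop sum_pair. Qed.

End Operators.

Section SesquilinearForm.
Variables (C : numClosedFieldType) (T : finType) (s : op C T T).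

Definition sesq (x y : T -> C) : C := \sum_c \sum_c' x c * s c c' * (y c')^*.

Lemma sesqBl x y z : sesq (fun c => x c - y c) z = sesq x z - sesq y z.
Proof.
rewrite /sesq -sumrB; apply: eq_bigr => c _; rewrite -sumrB.
by apply: eq_bigr => c' _; ring.
Qed.

Lemma sesqBr x y z : sesq z (fun c => x c - y c) = sesq z x - sesq z y.
Proof.
rewrite /sesq -sumrB; apply: eq_bigr => c _; rewrite -sumrB.
by apply: eq_bigr => c' _; rewrite rmorphB /=; ring.
Qed.

Lemma sesqZl a x y : sesq (fun c => a * x c) y = a * sesq x y.
Proof.
rewrite /sesq mulr_sumr; apply: eq_bigr => c _; rewrite mulr_sumr.
by apply: eq_bigr => c' _; ring.
Qed.

Lemma sesqZr a x y : sesq x (fun c => a * y c) = a^* * sesq x y.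
Proof.
rewrite /sesq mulr_sumr; apply: eq_bigr => c _; rewrite mulr_sumr.
by apply: eq_bigr => c' _; rewrite rmorphM /=; ring.
Qed.

Hypothesis s_psd : psd s.

Lemma sesq_conj x y : sesq y x = (sesq x y)^*.
Proof.
rewrite /sesq rmorph_sum /= exchange_big; apply: eq_bigr => c _.
rewrite rmorph_sum /=; apply: eq_bigr => c' _.
by rewrite !rmorphM /= conjCK -{1}s_psd.1 /adjop; ring.
Qed.

Lemma sesq_ge0 x : 0 <= sesq x x.
Proof.
have := s_psd.2 (fun c => (x c)^*); congr (0 <= _).
by apply: eq_bigr => c _; apply: eq_bigr => c' _; rewrite conjCK.
Qed.

(* Positivity on [(a + 1) x - z y] reads [- |z|^2 (a + 2) >= 0]. *)
Lemma sesq_null x y : sesq x x = 0 -> sesq x y = 0.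
Proof.
move=> x0; set z := sesq x y; set a := sesq y y.
have a_ge0 : 0 <= a by exact: sesq_ge0.
have a1_real : (a + 1)^* = a + 1 by apply: geC0_conj; rewrite addr_ge0.
have := sesq_ge0 (fun c => (a + 1) * x c - z * y c).
rewrite sesqBl !sesqBr !sesqZl !sesqZr x0 (sesq_conj x y) -/z -/a a1_real.
have -> : (a + 1) * ((a + 1) * 0) - (a + 1) * (z^* * z) -
    (z * ((a + 1) * z^*) - z * (z^* * a)) = - ((z * z^*) * (a + 2)) by ring.
rewrite oppr_ge0 pmulr_lle0 ?ltr_wpDl ?ltr0n //.
move=> zz_le0; have /eqP : z * z^* = 0 by apply/eqP; rewrite eq_le zz_le0 mul_conjC_ge0.
by rewrite mul_conjC_eq0 => /eqP.
Qed.

Lemma sesq_eq_of_null_diff (R : finType) (x y : R -> T -> C) r z :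
  \sum_r sesq (fun c => x r c - y r c) (fun c => x r c - y r c) = 0 ->
  sesq (x r) z = sesq (y r) z /\ sesq z (x r) = sesq z (y r).
Proof.
move=> diff0.
have r0 := psumr_eq0P (fun r' _ => sesq_ge0 _) diff0 (i := r) isT.
have /eqP := sesq_null z r0; rewrite sesqBl subr_eq0 => /eqP xy; split=> //.
by rewrite sesq_conj xy -sesq_conj.
Qed.

End SesquilinearForm.

Section ProductVectors.
Variables (C : numClosedFieldType) (E F : finType) (s : op C (E * F)%type (E * F)%type).

Definition basisvec (T : finType) (t : T) : T -> C := fun u => (t == u)%:R.

Definition tensvec (x : E -> C) (y : F -> C) : E * F -> C := fun c => x c.1 * y c.2.

Lemma sesq_tensvec_basisr (x y : E -> C) f f' :
  sesq s (tensvec x (basisvec f)) (tensvec y (basisvec f')) =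
  \sum_e \sum_e' x e * s (e, f) (e', f') * (y e')^*.
Proof.
rewrite /sesq sum_pair; apply: eq_bigr => e _.
transitivity (\sum_g (g == f)%:R * \sum_e' \sum_g' (g' == f')%:R *
                 (x e * s (e, g) (e', g') * (y e')^*)).
  apply: eq_bigr => g _; rewrite sum_pair mulr_sumr; apply: eq_bigr => e' _.
  rewrite mulr_sumr; apply: eq_bigr => g' _.
  rewrite /tensvec /basisvec rmorphM /= conjC_nat [f == _]eq_sym [f' == _]eq_sym.
  by ring.
by rewrite sum_deltal; apply: eq_bigr => e' _; rewrite sum_deltal.
Qed.

Lemma sesq_tensvec_basisl (x y : F -> C) e e' :
  sesq s (tensvec (basisvec e) x) (tensvec (basisvec e') y) =
  \sum_f \sum_f' x f * s (e, f) (e', f') * (y f')^*.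
Proof.
rewrite /sesq sum_pair.
transitivity (\sum_g (g == e)%:R * \sum_f \sum_g' (g' == e')%:R *
                 \sum_f' (x f * s (g, f) (g', f') * (y f')^*)).
  apply: eq_bigr => g _; rewrite mulr_sumr; apply: eq_bigr => f _.
  rewrite sum_pair mulr_sumr; apply: eq_bigr => g' _; rewrite !mulr_sumr.
  apply: eq_bigr => f' _.
  rewrite /tensvec /basisvec rmorphM /= conjC_nat [e == _]eq_sym [e' == _]eq_sym.
  by ring.
by rewrite sum_deltal; apply: eq_bigr => f _; rewrite sum_deltal.
Qed.

End ProductVectors.

Arguments basisvec {C T} t.

Section RankOneGram.
Variables (C : numClosedFieldType) (T R M : finType) (s : op C T T).
Hypothesis s_psd : psd s.
Variable psi : M -> C.
Hypothesis psi_norm : \sum_i (psi i)^* * psi i = 1.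
Variables a b : M -> R -> T -> C.
Hypothesis gram_aa : forall i j, \sum_r sesq s (a i r) (a j r) = psi i * (psi j)^*.
Hypothesis gram_bb : forall i j, \sum_r sesq s (b i r) (b j r) = psi i * (psi j)^*.
Hypothesis gram_ab : forall i j, \sum_r sesq s (a i r) (b j r) = psi i * (psi j)^*.

Lemma sesq_a_rank_one i j r z :
  sesq s (fun c => psi j * a i r c) z = sesq s (fun c => psi i * a j r c) z /\
  sesq s z (fun c => psi j * a i r c) = sesq s z (fun c => psi i * a j r c).
Proof.
apply: (sesq_eq_of_null_diff s_psd (x := fun r c => psi j * a i r c)
  (y := fun r c => psi i * a j r c)).
under eq_bigr do rewrite sesqBl !sesqBr !sesqZl !sesqZr.
by rewrite !sumrB -!mulr_sumr !gram_aa; ring.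
Qed.

Lemma sesq_a_eq_b i r z :
  sesq s (a i r) z = sesq s (b i r) z /\ sesq s z (a i r) = sesq s z (b i r).
Proof.
apply: (sesq_eq_of_null_diff s_psd (x := a i) (y := b i)).
have gram_ba : \sum_r sesq s (b i r) (a i r) = psi i * (psi i)^*.
  under eq_bigr do rewrite (sesq_conj s_psd).
  by rewrite -rmorph_sum gram_ab rmorphM /= conjCK mulrC.
under eq_bigr do rewrite sesqBl !sesqBr.
by rewrite !sumrB gram_aa gram_bb gram_ab gram_ba; ring.
Qed.

Lemma sesq_a_factor i i' r r' :
  sesq s (a i r) (a i' r') = psi i * (psi i')^* * \sum_l sesq s (b l r) (b l r').
Proof.
transitivity (\sum_l sesq s (fun c => psi l * a i r c) (fun c => psi l * a i' r' c)).
  under eq_bigr do rewrite sesqZl sesqZr mulrA.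
  rewrite -mulr_suml -[LHS]mul1r; congr (_ * _).
  by rewrite -psi_norm; apply: eq_bigr => l _; rewrite mulrC.
rewrite mulr_sumr; apply: eq_bigr => l _.
rewrite (sesq_a_rank_one i l r _).1 (sesq_a_rank_one i' l r' _).2 sesqZl sesqZr.
by rewrite (sesq_a_eq_b l r _).1 (sesq_a_eq_b l r' _).2 mulrA.
Qed.

End RankOneGram.

Section TestStates.
Variable C : numClosedFieldType.

Definition ketbra (T : finType) (k : T) : op C T T :=
  fun a b => ((a == k) && (b == k))%:R.

Definition ketbra_plus : op C bool bool := fun _ _ => 2^-1.

Lemma sum_ketbra (T : finType) (k : T) (G : T -> T -> C) :
  \sum_a \sum_b ketbra k a b * G a b = G k k.
Proof.
under eq_bigr => a _ do under eq_bigr => b _ do rewrite /ketbra -mulnb natrM -mulrA.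
by under eq_bigr do rewrite -mulr_sumr sum_deltal; rewrite sum_deltal.
Qed.

Lemma conjop_tensop_ketbra (S T U : finType) (A : op C S (T * U)%type) (k : T)
    (Y : op C U U) i j :
  conjop A (tensop (ketbra k) Y) i j =
  \sum_u \sum_u' A i (k, u) * Y u u' * (A j (k, u'))^*.
Proof.
rewrite conjopE sum_pair; under eq_bigr do under eq_bigr do rewrite sum_pair.
under eq_bigr do rewrite exchange_big.
rewrite -(sum_ketbra k (fun t t' => \sum_u \sum_u' A i (t, u) * Y u u' * (A j (t', u'))^*)).
apply: eq_bigr => t _; apply: eq_bigr => t' _; rewrite mulr_sumr; apply: eq_bigr => u _.
by rewrite mulr_sumr; apply: eq_bigr => u' _; rewrite /tensop /=; ring.
Qed.

Lemma ketbra_state (T : finType) (k : T) : state (ketbra k).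
Proof.
split; [split|].
- by apply: op_ext => a b; rewrite /adjop /ketbra conjC_nat andbC.
- move=> v; rewrite (eq_bigr (fun i => \sum_j ketbra k i j * ((v i)^* * v j))).
    by rewrite sum_ketbra mulrC mul_conjC_ge0.
  by move=> i _; apply: eq_bigr => j _; ring.
- rewrite /trop /ketbra; under eq_bigr do rewrite andbb -[_%:R]mulr1.
  exact: sum_deltal.
Qed.

Lemma ketbra_plus_state : state ketbra_plus.
Proof.
have half_ge0 : 0 <= (2 : C)^-1 by rewrite invr_ge0 ler0n.
split; [split|].
- by apply: op_ext => p q; rewrite /adjop /ketbra_plus geC0_conj.
- move=> v; rewrite !big_bool /ketbra_plus /=.
  have -> : (v true)^* * 2^-1 * v true + (v true)^* * 2^-1 * v false +
      ((v false)^* * 2^-1 * v true + (v false)^* * 2^-1 * v false) =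
      2^-1 * ((v true + v false) * (v true + v false)^*) by rewrite rmorphD /=; ring.
  by rewrite mulr_ge0 ?mul_conjC_ge0.
- by rewrite /trop big_bool /ketbra_plus /= [RHS](splitr 1) mul1r.
Qed.

Lemma chanC_ketbra m (psi : 'I_m -> C) k (omega : op C bool bool) i p j q :
  chanC psi (tensop (ketbra k) omega) (i, p) (j, q) = psi i * (psi j)^* * omega p q.
Proof.
rewrite /chanC /tensop /ketbra /=; congr (_ * _).
by under eq_bigr do rewrite andbb; rewrite sum_deltal.
Qed.

End TestStates.

Arguments ketbra {C T} k.

Section VacuumEmbedding.
Variables (C : numClosedFieldType) (m : nat).

Definition Ubasis (j : 'I_m * bool) : option 'I_m * option 'I_m :=
  if j.2 then (None, Some j.1) else (Some j.1, None).

Lemma UvacE x j : @Uvac C m x j = (x == Ubasis j)%:R.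
Proof. by case: j => a []; case: x => x1 x2; rewrite /Uvac /Ubasis /= xpair_eqE. Qed.

Lemma Ubasis_eq i j : (Ubasis i == Ubasis j) = (i == j).
Proof. by case: i j => [a []] [b []]; rewrite /Ubasis /= !xpair_eqE /= ?andbT ?andbF. Qed.

Lemma adjUvac_mul_UvacE (Y : op C _ _) i j :
  mulop (mulop (adjop (@Uvac C m)) Y) (@Uvac C m) i j = Y (Ubasis i) (Ubasis j).
Proof.
rewrite /mulop /adjop.
under eq_bigr do under eq_bigr do rewrite UvacE conjC_nat.
by under eq_bigr do rewrite sum_deltal UvacE; rewrite sum_deltar.
Qed.

Lemma conjop_Uvac_Ubasis (X : op C ('I_m * bool)%type ('I_m * bool)%type) i j :
  conjop (@Uvac C m) X (Ubasis i) (Ubasis j) = X i j.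
Proof.
rewrite conjopE.
under eq_bigr do under eq_bigr do
  rewrite !UvacE !Ubasis_eq conjC_nat [i == _]eq_sym [j == _]eq_sym.
by under eq_bigr do rewrite sum_deltar; rewrite sum_deltal.
Qed.

End VacuumEmbedding.

Section LocalChannel.
Variables (C : numClosedFieldType) (m : nat) (E F : finType).
Variables (V : op C ('I_m * E)%type ('I_m * E)%type).
Variables (W : op C ('I_m * F)%type ('I_m * F)%type).
Variable sigma : op C (E * F)%type (E * F)%type.

Local Notation L := (locop (vacext V) (vacext W)).

Definition local_channel (X : op C ('I_m * bool)%type ('I_m * bool)%type) :=
  mulop (mulop (adjop (@Uvac C m))
    (ptrace2 (conjop L (tensop (conjop (@Uvac C m) X) sigma)))) (@Uvac C m).

(* The extended unitaries never move the particle to the other path, so these are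
   the only entries of [L] out of [U |i, p> (x) |r>] that can be nonzero. *)
Definition amp (p : bool) (i : 'I_m) (r : E * F) (a : 'I_m) : E * F -> C :=
  fun c => L (Ubasis (i, p), r) (Ubasis (a, p), c).

Lemma amp_pathA i e f a :
  amp false i (e, f) a = tensvec (fun e1 => V (i, e) (a, e1)) (basisvec f).
Proof. by []. Qed.

Lemma amp_pathB i e f b :
  amp true i (e, f) b = tensvec (basisvec e) (fun f1 => W (i, f) (b, f1)).
Proof. by []. Qed.

Lemma sum_locop_sector i p r (G : (option 'I_m * option 'I_m) * (E * F) -> C) :
  (forall z, L (Ubasis (i, p), r) z = 0 -> G z = 0) ->
  \sum_z G z = \sum_a \sum_c G (Ubasis (a, p), c).
Proof.
move=> G0; rewrite sum_pair sum_pair; case: p G0 => G0; rewrite sum_option /=.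
- rewrite [X in _ + X]big1 ?addr0 => [|a _]; last first.
    apply: big1 => z2 _; apply: big1 => c _.
    by apply: G0; rewrite /locop /vacext /= mul0r.
  rewrite sum_option /= big1 ?add0r // => c _.
  by apply: G0; rewrite /locop /vacext /= mulr0.
- rewrite big1 ?add0r => [|z2 _]; last first.
    by apply: big1 => c _; apply: G0; rewrite /locop /vacext /= mul0r.
  apply: eq_bigr => a _; rewrite sum_option /= [X in _ + X]big1 ?addr0 // => b _.
  by apply: big1 => c _; apply: G0; rewrite /locop /vacext /= mulr0.
Qed.

Lemma conjop_locop_Ubasis Y i p j q r r' :
  conjop L Y (Ubasis (i, p), r) (Ubasis (j, q), r') =
  \sum_a \sum_c \sum_b \sum_c'
    amp p i r a c * Y (Ubasis (a, p), c) (Ubasis (b, q), c') * (amp q j r' b c')^*.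
Proof.
rewrite conjopE (sum_locop_sector (i := i) (p := p) (r := r)) => [|z Lz0]; last first.
  by apply: big1 => w _; rewrite Lz0 !mul0r.
apply: eq_bigr => a _; apply: eq_bigr => c _.
rewrite (sum_locop_sector (i := j) (p := q) (r := r')) // => w ->.
by rewrite conjC0 mulr0.
Qed.

Lemma local_channel_entry X i p j q :
  local_channel X (i, p) (j, q) =
  \sum_a \sum_b X (a, p) (b, q) * \sum_r sesq sigma (amp p i r a) (amp q j r b).
Proof.
rewrite /local_channel adjUvac_mul_UvacE /ptrace2.
under eq_bigr do rewrite conjop_locop_Ubasis.
rewrite exchange_big; apply: eq_bigr => a _.
under eq_bigr do rewrite exchange_big.
rewrite exchange_big; apply: eq_bigr => b _.
rewrite mulr_sumr; apply: eq_bigr => r _; rewrite /sesq mulr_sumr.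
apply: eq_bigr => c _; rewrite mulr_sumr; apply: eq_bigr => c' _.
by rewrite /tensop /= conjop_Uvac_Ubasis; ring.
Qed.

Lemma local_channel_ketbra k omega i p j q :
  local_channel (tensop (ketbra k) omega) (i, p) (j, q) =
  omega p q * \sum_r sesq sigma (amp p i r k) (amp q j r k).
Proof.
rewrite local_channel_entry /tensop /=.
under eq_bigr do under eq_bigr do rewrite -mulrA.
exact: (sum_ketbra k (fun a b => omega p q * _)).
Qed.

Lemma amp_pathA_marginal k i i' e e' :
  \sum_f sesq sigma (amp false i (e, f) k) (amp false i' (e', f) k) =
  conjop V (tensop (ketbra k) (ptrace2 sigma)) (i, e) (i', e').
Proof.
under eq_bigr do rewrite amp_pathA amp_pathA sesq_tensvec_basisr.
rewrite conjop_tensop_ketbra exchange_big; apply: eq_bigr => u _.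
rewrite exchange_big; apply: eq_bigr => u' _.
by rewrite /ptrace2 mulr_sumr mulr_suml.
Qed.

Lemma amp_pathB_marginal : unitary W -> forall k e e',
  \sum_l \sum_f sesq sigma (amp true l (e, f) k) (amp true l (e', f) k) =
  ptrace2 sigma e e'.
Proof.
move=> W_unitary k e e'.
under eq_bigr do under eq_bigr do rewrite amp_pathB amp_pathB sesq_tensvec_basisl.
rewrite pair_bigA /= exchange_big; apply: eq_bigr => g _.
rewrite exchange_big.
transitivity (\sum_g' sigma (e, g) (e', g') * ((k, g') == (k, g))%:R).
  apply: eq_bigr => g' _; rewrite -(unitary_cols _ _ W_unitary) mulr_sumr.
  by apply: eq_bigr => -[l f] _ /=; ring.
by under eq_bigr do rewrite xpair_eqE eqxx; rewrite sum_deltar.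
Qed.

End LocalChannel.

Section ErasureSimulation.
Variables (C : numClosedFieldType) (m : nat) (E F : finType).
Variables (V : op C ('I_m * E)%type ('I_m * E)%type).
Variables (W : op C ('I_m * F)%type ('I_m * F)%type).
Variable sigma : op C (E * F)%type (E * F)%type.
Hypotheses (sigma_psd : psd sigma) (W_unitary : unitary W).
Variable psi : 'I_m -> C.
Hypothesis psi_norm : \sum_i (psi i)^* * psi i = 1.
Variable k : 'I_m.
Hypothesis simulates : forall omega, state omega ->
  chanC psi (tensop (ketbra k) omega) =
  local_channel V W sigma (tensop (ketbra k) omega).

Lemma amp_gram p q (omega : op C bool bool) :
  state omega -> omega p q != 0 -> forall i j,
  \sum_r sesq sigma (amp V W p i r k) (amp V W q j r k) = psi i * (psi j)^*.
Proof.
move=> omega_state omega_pq i j; apply: (mulIf omega_pq).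
have := congr1 (fun X => X (i, p) (j, q)) (simulates omega_state).
by rewrite /= chanC_ketbra local_channel_ketbra => ->; rewrite mulrC.
Qed.

Lemma conjop_ketbra_marginal :
  conjop V (tensop (ketbra k) (ptrace2 sigma)) =
  tensop (fun i j => psi i * (psi j)^*) (ptrace2 sigma).
Proof.
have gram_diag p : forall i j,
    \sum_r sesq sigma (amp V W p i r k) (amp V W p j r k) = psi i * (psi j)^*.
  by apply: amp_gram (ketbra_state C p) _; rewrite /ketbra eqxx oner_eq0.
have gram_cross : forall i j,
    \sum_r sesq sigma (amp V W false i r k) (amp V W true j r k) = psi i * (psi j)^*.
  by apply: amp_gram (ketbra_plus_state C) _; rewrite invr_eq0 pnatr_eq0.
apply: op_ext => -[i e] [i' e'].
rewrite -(amp_pathA_marginal V W) /tensop /=.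
rewrite -(amp_pathB_marginal V sigma W_unitary k).
rewrite [in RHS]exchange_big mulr_sumr; apply: eq_bigr => f _.
exact: (sesq_a_factor sigma_psd psi_norm (gram_diag false) (gram_diag true) gram_cross).
Qed.

End ErasureSimulation.

Theorem proposition1 (C : numClosedFieldType) (m : nat) (hm : (2 <= m)%N)
    (psi0 : 'I_m -> C) (hpsi0 : \sum_(i : 'I_m) (psi0 i)^* * psi0 i = 1) :
  ~ exists (e f : nat) (sigma : op C ('I_e * 'I_f)%type ('I_e * 'I_f)%type)
      (V : op C ('I_m * 'I_e)%type ('I_m * 'I_e)%type)
      (W : op C ('I_m * 'I_f)%type ('I_m * 'I_f)%type),
      [/\ state sigma, unitary V, unitary W &
       forall (rho : op C 'I_m 'I_m) (omega : op C bool bool),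
         state rho -> state omega ->
         chanC psi0 (tensop rho omega) =
         mulop (mulop (adjop (@Uvac C m))
           (ptrace2
              (conjop (locop (vacext V) (vacext W))
                 (tensop (conjop (@Uvac C m) (tensop rho omega)) sigma))))
           (@Uvac C m)].
Proof.
move=> [e [f [sigma [V [W [sigma_state V_unitary W_unitary simulates]]]]]].
have product k := conjop_ketbra_marginal sigma_state.1 W_unitary hpsi0
  (fun omega => simulates _ omega (ketbra_state C k)).
pose k0 : 'I_m := Ordinal (ltnW hm).
pose k1 : 'I_m := Ordinal hm.
have ketbra_indep :
    tensop (ketbra k0) (ptrace2 sigma) = tensop (ketbra k1) (ptrace2 sigma).
  by apply: (conjop_inj V_unitary); rewrite !product.
have marginal0 e0 : ptrace2 sigma e0 e0 = 0.
  have := congr1 (fun X => X (k0, e0) (k0, e0)) ketbra_indep.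
  by rewrite /tensop /ketbra /= mul1r mul0r.
have := sigma_state.2; rewrite -trop_ptrace2 /trop big1 // => /esym/eqP.
by rewrite oner_eq0.
Qed.
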